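(* Let $c>0$, $a=\ln c$, and let $\phi^{\bullet}(\epsilon;c)$, $\phi^{\ell_2}(\epsilon;c)$ be as below. Define $$\phi^{\ell_2}_{\mathrm{ren}}(c)=\lim_{\epsilon\to0^+}\Big[\phi^{\ell_2}-R(\phi^{\ell_2})-R(\phi^{\bullet})\,\phi^{\bullet}+R\big(R(\phi^{\bullet})\,\phi^{\bullet}\big)\Big](\epsilon;c).$$ Then the limit exists and $\phi^{\ell_2}_{\mathrm{ren}}(c)=\dfrac{a^2}{2}+\dfrac{\pi^2}{4}$.
   Context: For $c>0$ and $0<\epsilon<1/2$: $\phi^{\bullet}(\epsilon;c)=\int_0^\infty\frac{y^{-\epsilon}dy}{y+c}$ and $\phi^{\ell_2}(\epsilon;c)=\int_0^\infty\frac{y^{-\epsilon}dy}{y+c}\int_0^\infty\frac{z^{-\epsilon}dz}{z+y}$. The subtraction operator $R$ acts on a function $F(\epsilon;c)$ which, for each fixed $c$, has a Laurent expansion in $\epsilon$ at $\epsilon=0$ with finite principal part: $R(F)$ is the function of $\epsilon$ alone (constant in $c$) equal to the principal (pole) part of the Laurent expansion of $\epsilon\mapsto F(\epsilon;1)$. Products such as $R(\phi^\bullet)\phi^\bullet$ are pointwise products of functions of $(\epsilon,c)$. *)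

From Stdlib Require Import Reals List ClassicalEpsilon.
From Coquelicot Require Import Coquelicot.
Open Scope R_scope.

Definition int0inf (f : R -> R) : R :=
  RInt_gen f (at_right 0) (Rbar_locally p_infty).

Definition phi_dot (eps c : R) : R :=
  int0inf (fun y => Rpower y (- eps) / (y + c)).

Definition phi_l2 (eps c : R) : R :=
  int0inf (fun y => Rpower y (- eps) / (y + c) *
                    int0inf (fun z => Rpower z (- eps) / (z + y))).

(* The finite principal part  sum_{k=1}^{N} a_{k} eps^{-k}  (a k is the coefficient of eps^{-(k+1)}). *)
Definition principal_sum (N : nat) (a : nat -> R) (e : R) : R :=
  fold_right Rplus 0 (map (fun k => a k / e ^ (S k)) (seq 0 N)).

Definition is_principal_part (g P : R -> R) : Prop :=
  exists (N : nat) (a b : nat -> R) (delta : R),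
    0 < delta /\
    P = principal_sum N a /\
    forall e, 0 < e < delta -> is_pseries b e (g e - P e).

(* The subtraction operator R: principal part of eps |-> F(eps; 1), viewed as a function of eps
   alone (constant in c).  Chosen by description; it is unique when it exists. *)
Definition Rop (F : R -> R -> R) : R -> R :=
  epsilon (inhabits (fun _ : R => 0)) (fun P => is_principal_part (fun e => F e 1) P).

From Stdlib Require Import Reals Lra Lia List ClassicalEpsilon.
From Coquelicot Require Import Coquelicot.
Open Scope R_scope.

(* Substituting y = c t gives phi_dot(eps; c) = c^-eps I(eps), where
   I(eps) = int_0^oo t^-eps / (t + 1) dt; the inner integral of phi_l2 is phi_dot(eps; y), so
   phi_l2(eps; c) = I(eps) c^-2eps I(2 eps).  Expanding 1/(t + 1) geometrically on (0, 1), and on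
   (1, oo) after t -> 1/t, gives I(eps) = 1/eps + eps B(eps) with B the partial-fraction series
   sum_n (-1)^n 2 / ((n + 1)^2 - eps^2), a power series with B(0) = 2 eta(2) = pi^2/6 (this rests
   on the Basel problem).  Hence R(phi_dot) = 1/eps, R(R(phi_dot) phi_dot) = 1/eps^2 and
   R(phi_l2) = 1/(2 eps^2); these are unique because a principal part that stays bounded as
   eps -> 0+ vanishes.  With u = c^-eps the renormalized combination is then
   ((u - 1)/eps)^2/2 + u^2 (2 B(2 eps) + B(eps)/2 + 2 eps^2 B(eps) B(2 eps)) - u B(eps),
   which tends to (ln c)^2/2 + 5 pi^2/12 - pi^2/6. *)

Lemma Rabs_m1_pow n : Rabs ((-1) ^ n) = 1.
Proof. rewrite <- RPow_abs, Rabs_m1. apply pow1. Qed.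

Lemma Rpower_pos t q : 0 < Rpower t q.
Proof. apply exp_pos. Qed.

Lemma Rpower_1_l q : Rpower 1 q = 1.
Proof. unfold Rpower. rewrite ln_1, Rmult_0_r. apply exp_0. Qed.

Lemma Rpower_inv t q : 0 < t -> Rpower (/ t) q = Rpower t (- q).
Proof. intros Ht. unfold Rpower. rewrite ln_Rinv by lra. f_equal; ring. Qed.

Lemma Rpower_S_plus t n p : 0 < t -> Rpower t (INR (S n) + p) = t * Rpower t (INR n + p).
Proof.
  intros Ht. rewrite S_INR. replace (INR n + 1 + p) with (1 + (INR n + p)) by ring.
  rewrite Rpower_plus, Rpower_1 by lra. reflexivity.
Qed.

Lemma is_derive_Rpower t q : 0 < t -> is_derive (fun t => Rpower t q) t (q * Rpower t (q - 1)).
Proof. intros Ht. apply is_derive_Reals, derivable_pt_lim_power, Ht. Qed.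

Lemma is_RInt_of_derive (F f : R -> R) a b :
  (forall x, is_derive F x (f x)) -> (forall x, continuous f x) ->
  is_RInt f a b (F b - F a).
Proof. intros HF Hf. apply (is_RInt_derive F f); auto. Qed.

Lemma is_RInt_R_unique (f : R -> R) a b l l' : is_RInt f a b l -> is_RInt f a b l' -> l = l'.
Proof.
  intros H H'. rewrite <- (is_RInt_unique _ _ _ _ H). exact (is_RInt_unique _ _ _ _ H').
Qed.

Lemma is_RInt_R_zero a b : is_RInt (fun _ => 0) a b 0.
Proof.
  assert (H := is_RInt_const a b 0). unfold scal in H; simpl in H; unfold mult in H; simpl in H.
  rewrite Rmult_0_r in H. exact H.
Qed.

Lemma Rle_of_le_plus_lim (u v : R) (w : nat -> R) :
  (forall N, u <= v + w N) -> is_lim_seq w 0 -> u <= v.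
Proof.
  intros H Hw.
  assert (L := is_lim_seq_le (fun _ => u) (fun N => v + w N) u (v + 0) H (is_lim_seq_const u)
                 (is_lim_seq_plus' _ _ _ _ (is_lim_seq_const v) Hw)).
  simpl in L. lra.
Qed.

Lemma is_lim_seq_inv_INR_plus c : 0 < c -> is_lim_seq (fun N => 1 / (INR N + c)) 0.
Proof.
  intros Hc. apply (is_lim_seq_ext (fun N => / (INR N + c))); [intros; unfold Rdiv; ring|].
  apply (is_lim_seq_inv _ p_infty); [|discriminate].
  apply (is_lim_seq_plus INR (fun _ => c) p_infty c); [apply is_lim_seq_INR | apply is_lim_seq_const|].
  reflexivity.
Qed.

Lemma at_right_0_lt d : 0 < d -> at_right 0 (fun e => 0 < e < d).
Proof.
  intros Hd. exists (mkposreal d Hd). intros y Hy Hy0. split; [exact Hy0|].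
  unfold ball in Hy; simpl in Hy; unfold AbsRing_ball, abs, minus, plus, opp in Hy; simpl in Hy.
  apply Rabs_lt_between in Hy. lra.
Qed.

Lemma at_right_0_pos : at_right 0 (fun e => 0 < e).
Proof. exists (mkposreal 1 Rlt_0_1). auto. Qed.

Section RealLimits.

Context {T : Type} {F : (T -> Prop) -> Prop} {FF : Filter F}.

Lemma filterlim_Rplus (f g : T -> R) a b :
  filterlim f F (locally a) -> filterlim g F (locally b) ->
  filterlim (fun x => f x + g x) F (locally (a + b)).
Proof.
  intros Hf Hg. apply (filterlim_comp_2 f g Rplus Hf Hg).
  apply (@filterlim_plus R_AbsRing R_NormedModule a b).
Qed.

Lemma filterlim_Rmult (f g : T -> R) a b :
  filterlim f F (locally a) -> filterlim g F (locally b) ->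
  filterlim (fun x => f x * g x) F (locally (a * b)).
Proof.
  intros Hf Hg. apply (filterlim_comp_2 f g Rmult Hf Hg).
  apply (@filterlim_mult R_AbsRing a b).
Qed.

Lemma filterlim_Rminus (f g : T -> R) a b :
  filterlim f F (locally a) -> filterlim g F (locally b) ->
  filterlim (fun x => f x - g x) F (locally (a - b)).
Proof.
  intros Hf Hg. replace (a - b) with (a + -1 * b) by ring.
  apply (filterlim_ext (fun x => f x + -1 * g x)); [intros; ring|].
  apply filterlim_Rplus, filterlim_Rmult; [| apply filterlim_const |]; assumption.
Qed.

End RealLimits.

Lemma filterlim_at_right_of_continuous (f : R -> R) x :
  continuous f x -> filterlim f (at_right x) (locally (f x)).
Proof. intros H. apply (filterlim_filter_le_1 _ (filter_le_within _)), H. Qed.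

Lemma CV_radius_ge_of_ex_pseries b x : 0 <= x -> ex_pseries b x -> Rbar_le x (CV_radius b).
Proof.
  intros Hx [l Hl].
  assert (H0 : is_lim_seq (fun n => x ^ n * b n) 0).
  { apply ex_series_lim_0. exists l. revert Hl. apply is_series_ext.
    intros n. unfold scal; simpl; unfold mult; simpl. now rewrite pow_n_pow. }
  destruct (filterlim_bounded _ (ex_intro _ 0 H0)) as [M HM].
  apply (proj1 (CV_radius_bounded b)). exists M. intros n.
  rewrite Rmult_comm. exact (HM n).
Qed.

Lemma Rabs_lt_CV_radius (a : nat -> R) (r e : R) :
  Rbar_le r (CV_radius a) -> 0 <= e < r -> Rbar_lt (Rabs e) (CV_radius a).
Proof.
  intros H He. rewrite Rabs_pos_eq by lra. revert H.
  destruct (CV_radius a) as [x| |]; simpl; intros; try easy; lra.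
Qed.

Lemma sum_f_R0_Series (f : nat -> nat -> R) K :
  (forall k, ex_series (f k)) ->
  sum_f_R0 (fun k => Series (f k)) K = Series (fun n => sum_f_R0 (fun k => f k n) K)
  /\ ex_series (fun n => sum_f_R0 (fun k => f k n) K).
Proof.
  intros H. induction K as [|K [IH1 IH2]]; simpl.
  - split; [reflexivity | apply H].
  - split.
    + rewrite IH1, <- Series_plus; auto.
    + apply (@ex_series_plus R_AbsRing R_NormedModule _ _ IH2 (H (S K))).
Qed.

(** * The Basel problem *)

Lemma sin_mul_sin x : sin x * sin x = 1 - cos x * cos x.
Proof. pose proof (sin2 x) as H. unfold Rsqr in H. lra. Qed.

Lemma is_derive_sin_mul_cos_pow k x :
  is_derive (fun x => sin x * cos x ^ S k) x
    (INR (S (S k)) * cos x ^ S (S k) - INR (S k) * cos x ^ k).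
Proof.
  auto_derive; auto.
  change (match k with 0%nat => 1 | S _ => INR k + 1 end) with (INR (S k)).
  rewrite (S_INR (S k)). set (n := INR (S k)).
  apply Rminus_diag_uniq.
  transitivity (- n * cos x ^ k * (sin x * sin x - (1 - cos x * cos x))).
  - simpl. ring.
  - rewrite sin_mul_sin. ring.
Qed.

Lemma is_derive_x_cos_pow k x :
  let m := INR (S (S k)) in
  is_derive (fun x => x * cos x ^ S (S k) + m / 2 * x ^ 2 * sin x * cos x ^ S k) x
    (cos x ^ S (S k) + m * m / 2 * (x ^ 2 * cos x ^ S (S k))
     - m * INR (S k) / 2 * (x ^ 2 * cos x ^ k)).
Proof.
  intros m. auto_derive; auto.
  change (match k with 0%nat => 1 | S _ => INR k + 1 end) with (INR (S k)).
  unfold m. rewrite !(S_INR (S k)). set (n := INR (S k)).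
  apply Rminus_diag_uniq.
  transitivity (- (n + 1) * n / 2 * x ^ 2 * cos x ^ k
                  * (sin x * sin x - (1 - cos x * cos x))).
  - simpl. field.
  - rewrite sin_mul_sin. ring.
Qed.

Definition wallis n : R := RInt (fun x => cos x ^ (2 * n)) 0 (PI / 2).
Definition wallis_sq n : R := RInt (fun x => x ^ 2 * cos x ^ (2 * n)) 0 (PI / 2).

Lemma is_RInt_wallis n : is_RInt (fun x => cos x ^ (2 * n)) 0 (PI / 2) (wallis n).
Proof.
  apply (@RInt_correct R_CompleteNormedModule), (@ex_RInt_continuous R_CompleteNormedModule).
  intros z _. apply (@ex_derive_continuous R_AbsRing R_NormedModule). auto_derive. auto.
Qed.

Lemma is_RInt_wallis_sq n :
  is_RInt (fun x => x ^ 2 * cos x ^ (2 * n)) 0 (PI / 2) (wallis_sq n).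
Proof.
  apply (@RInt_correct R_CompleteNormedModule), (@ex_RInt_continuous R_CompleteNormedModule).
  intros z _. apply (@ex_derive_continuous R_AbsRing R_NormedModule). auto_derive. auto.
Qed.

Lemma wallis_S n : INR (S (S (2 * n))) * wallis (S n) = INR (S (2 * n)) * wallis n.
Proof.
  set (k := (2 * n)%nat).
  assert (Hk : (2 * S n)%nat = S (S k)) by (unfold k; lia).
  assert (H0 := is_RInt_of_derive _ _ 0 (PI / 2) (is_derive_sin_mul_cos_pow k)
    ltac:(intros x; apply (@ex_derive_continuous R_AbsRing R_NormedModule); auto_derive; auto)).
  assert (H : is_RInt (fun x => INR (S (S k)) * cos x ^ S (S k) - INR (S k) * cos x ^ k)
                0 (PI / 2) (INR (S (S k)) * wallis (S n) - INR (S k) * wallis n)).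
  { apply (is_RInt_minus (fun x => INR (S (S k)) * cos x ^ S (S k)) (fun x => INR (S k) * cos x ^ k)).
    - apply (is_RInt_scal (fun x => cos x ^ S (S k))). rewrite <- Hk. apply is_RInt_wallis.
    - apply (is_RInt_scal (fun x => cos x ^ k)). apply is_RInt_wallis. }
  apply (is_RInt_R_unique _ _ _ _ _ H) in H0.
  cbv beta in H0. rewrite cos_PI2, sin_0, pow_i in H0 by lia. apply Rminus_diag_uniq. lra.
Qed.

Lemma wallis_sq_S n :
  let m := INR (S (S (2 * n))) in
  wallis (S n) + m * m / 2 * wallis_sq (S n) - m * INR (S (2 * n)) / 2 * wallis_sq n = 0.
Proof.
  intros m. set (k := (2 * n)%nat) in m |- *.
  assert (Hk : (2 * S n)%nat = S (S k)) by (unfold k; lia).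
  assert (H0 := is_RInt_of_derive _ _ 0 (PI / 2) (is_derive_x_cos_pow k)
    ltac:(intros x; apply (@ex_derive_continuous R_AbsRing R_NormedModule); auto_derive; auto)).
  assert (H : is_RInt (fun x => cos x ^ S (S k) + m * m / 2 * (x ^ 2 * cos x ^ S (S k))
                                - m * INR (S k) / 2 * (x ^ 2 * cos x ^ k)) 0 (PI / 2)
                (wallis (S n) + m * m / 2 * wallis_sq (S n) - m * INR (S k) / 2 * wallis_sq n)).
  { apply (is_RInt_minus (fun x => cos x ^ S (S k) + m * m / 2 * (x ^ 2 * cos x ^ S (S k)))
             (fun x => m * INR (S k) / 2 * (x ^ 2 * cos x ^ k))).
    - apply (is_RInt_plus (fun x => cos x ^ S (S k)) (fun x => m * m / 2 * (x ^ 2 * cos x ^ S (S k)))).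
      + rewrite <- Hk. apply is_RInt_wallis.
      + apply (is_RInt_scal (fun x => x ^ 2 * cos x ^ S (S k))). rewrite <- Hk. apply is_RInt_wallis_sq.
    - apply (is_RInt_scal (fun x => x ^ 2 * cos x ^ k)). apply is_RInt_wallis_sq. }
  apply (is_RInt_R_unique _ _ _ _ _ H) in H0.
  rewrite H0. cbv beta. rewrite cos_PI2, sin_0, !pow_i by lia. ring.
Qed.

Lemma wallis_0 : wallis 0 = PI / 2.
Proof.
  rewrite <- (is_RInt_unique _ _ _ _ (is_RInt_wallis 0)).
  rewrite (RInt_ext _ (fun _ => 1)) by reflexivity.
  rewrite RInt_const. unfold scal; simpl; unfold mult; simpl. ring.
Qed.

Lemma wallis_sq_0 : wallis_sq 0 = (PI / 2) ^ 3 / 3.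
Proof.
  unfold wallis_sq. rewrite (RInt_ext _ (fun x => x ^ 2)) by (intros; simpl; ring).
  rewrite (is_RInt_unique _ _ _ _ (is_RInt_pow 0 (PI / 2) 2)). simpl. field.
Qed.

Lemma wallis_S_eq n : wallis (S n) = (2 * INR n + 1) / (2 * INR n + 2) * wallis n.
Proof.
  assert (H := wallis_S n). assert (0 <= INR n) by apply pos_INR.
  rewrite !S_INR, mult_INR in H. simpl INR in H.
  apply (Rmult_eq_reg_l (2 * INR n + 2)); [|lra].
  replace (2 * INR n + 2) with ((1 + 1) * INR n + 1 + 1) at 1 by ring. rewrite H. field. lra.
Qed.

Lemma wallis_pos n : 0 < wallis n.
Proof.
  induction n as [|n IH].
  - rewrite wallis_0. pose proof PI_RGT_0. lra.
  - rewrite wallis_S_eq. assert (0 <= INR n) by apply pos_INR.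
    apply Rmult_lt_0_compat; [apply Rdiv_lt_0_compat|]; lra.
Qed.

Definition wallis_ratio n : R := wallis_sq n / wallis n.

Lemma inv_sq_eq_wallis_ratio n : / (INR n + 1) ^ 2 = 2 * wallis_ratio n - 2 * wallis_ratio (S n).
Proof.
  unfold wallis_ratio. assert (H := wallis_sq_S n). rewrite wallis_S_eq in *.
  assert (Ha := wallis_pos n). assert (0 <= INR n) by apply pos_INR.
  rewrite !S_INR, mult_INR in H. simpl INR in H.
  set (m := INR n) in *. set (A := wallis n) in *.
  assert (Hb : wallis_sq (S n) =
    (2 * m + 1) * wallis_sq n / (2 * m + 2) - 2 * ((2 * m + 1) / (2 * m + 2) * A) / (2 * m + 2) ^ 2).
  { replace ((1 + 1) * m + 1 + 1) with (2 * m + 2) in H by ring.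
    replace ((1 + 1) * m + 1) with (2 * m + 1) in H by ring.
    apply (Rmult_eq_reg_l ((2 * m + 2) * (2 * m + 2) / 2)); [|apply Rgt_not_eq; nra].
    apply Rminus_diag_uniq. rewrite <- H. field. lra. }
  rewrite Hb. field. lra.
Qed.

Lemma x_le_3_sin x : 0 <= x <= PI / 2 -> x <= 3 * sin x.
Proof.
  intros Hx. pose proof PI_4. pose proof PI_RGT_0.
  destruct (sin_bound x 0 ltac:(lra) ltac:(lra)) as [Hs _].
  unfold sin_approx, sin_term in Hs. simpl in Hs. field_simplify in Hs.
  assert (x * x <= 4) by nra. nra.
Qed.

Lemma wallis_sq_bounds n : 0 <= wallis_sq n <= 9 * (wallis n - wallis (S n)).
Proof.
  assert (Hpi : 0 < PI / 2) by (pose proof PI_RGT_0; lra).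
  assert (Hc : forall x, 0 <= cos x ^ (2 * n)) by (intros; rewrite pow_mult; apply pow_le, pow2_ge_0).
  split.
  - apply (is_RInt_le (fun _ => 0) (fun x => x ^ 2 * cos x ^ (2 * n)) 0 (PI / 2) 0); try lra.
    + apply is_RInt_R_zero.
    + apply is_RInt_wallis_sq.
    + intros x _. apply Rmult_le_pos; [apply pow2_ge_0|apply Hc].
  - apply (is_RInt_le (fun x => x ^ 2 * cos x ^ (2 * n))
             (fun x => 9 * (cos x ^ (2 * n) - cos x ^ (2 * S n))) 0 (PI / 2)); try lra.
    + apply is_RInt_wallis_sq.
    + apply (is_RInt_scal (fun x => cos x ^ (2 * n) - cos x ^ (2 * S n))).
      apply (is_RInt_minus (fun x => cos x ^ (2 * n)) (fun x => cos x ^ (2 * S n)));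
        apply is_RInt_wallis.
    + intros x Hx.
      replace (2 * S n)%nat with (2 + 2 * n)%nat by lia. rewrite pow_add.
      assert (Hs := x_le_3_sin x ltac:(lra)). assert (Hss := sin_mul_sin x).
      assert (x ^ 2 <= 9 * (1 - cos x ^ 2)) by (simpl; nra).
      replace (9 * (cos x ^ (2 * n) - cos x ^ 2 * cos x ^ (2 * n)))
        with (9 * (1 - cos x ^ 2) * cos x ^ (2 * n)) by ring.
      apply Rmult_le_compat_r; auto.
Qed.

Lemma wallis_ratio_bounds n : 0 <= wallis_ratio n <= 9 / (2 * INR n + 2).
Proof.
  assert (H := wallis_sq_bounds n). assert (Ha := wallis_pos n).
  rewrite wallis_S_eq in H. assert (0 <= INR n) by apply pos_INR.
  unfold wallis_ratio. split.
  - apply Rdiv_le_0_compat; lra.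
  - apply (Rmult_le_reg_r (wallis n)); [lra|].
    replace (9 * (wallis n - (2 * INR n + 1) / (2 * INR n + 2) * wallis n))
      with (9 / (2 * INR n + 2) * wallis n) in H by (field; lra).
    field_simplify; lra.
Qed.

(* Matsuoka's telescoping proof, with wallis_ratio n = O(1/n). *)
Theorem basel : is_series (fun n => / (INR n + 1) ^ 2) (PI ^ 2 / 6).
Proof.
  assert (Hsum : forall N, sum_n (fun n => / (INR n + 1) ^ 2) N
                           = 2 * wallis_ratio 0 - 2 * wallis_ratio (S N)).
  { induction N as [|N IH].
    - rewrite sum_O. apply inv_sq_eq_wallis_ratio.
    - rewrite sum_Sn, IH, (inv_sq_eq_wallis_ratio (S N)). unfold plus; simpl. ring. }
  assert (H0 : 2 * wallis_ratio 0 = PI ^ 2 / 6).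
  { unfold wallis_ratio. rewrite wallis_0, wallis_sq_0. field. pose proof PI_RGT_0. lra. }
  unfold is_series. apply (filterlim_ext (fun N => 2 * wallis_ratio 0 - 2 * wallis_ratio (S N))).
  { intros; now rewrite Hsum. }
  replace (PI ^ 2 / 6) with (2 * wallis_ratio 0 - 2 * 0) by lra.
  apply (is_lim_seq_minus' _ _ _ _ (is_lim_seq_const _)), (is_lim_seq_scal_l _ 2 0).
  apply (is_lim_seq_le_le (fun _ => 0) _ (fun n => 9 * / INR (S n))).
  - intros n. pose proof (wallis_ratio_bounds (S n)) as [Hlo Hhi]. split; [lra|].
    rewrite S_INR in *. assert (0 <= INR n) by apply pos_INR.
    apply (Rle_trans _ _ _ Hhi). apply Rmult_le_compat_l; [lra|]. apply Rinv_le_contravar; lra.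
  - apply is_lim_seq_const.
  - replace (Finite 0) with (Rbar_mult 9 0) by (simpl; f_equal; ring).
    apply is_lim_seq_scal_l, (is_lim_seq_inv _ p_infty); [|discriminate].
    apply (is_lim_seq_incr_1 INR p_infty), is_lim_seq_INR.
Qed.

Lemma alt_inv_sq_sum_odd N :
  sum_n (fun n => (-1) ^ n / (INR n + 1) ^ 2) (2 * N + 1)
  = sum_n (fun n => / (INR n + 1) ^ 2) (2 * N + 1) - / 2 * sum_n (fun n => / (INR n + 1) ^ 2) N.
Proof.
  set (a := fun n => (-1) ^ n / (INR n + 1) ^ 2). set (z := fun n => / (INR n + 1) ^ 2).
  induction N as [|N IH].
  - simpl. rewrite !sum_Sn, !sum_O. unfold a, z, plus; simpl. field.
  - replace (2 * S N + 1)%nat with (S (S (2 * N + 1))) by lia.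
    rewrite !sum_Sn, IH. change (plus ?x ?y) with (Rplus x y).
    assert (Hev : (-1) ^ S (2 * N + 1) = 1).
    { replace (S (2 * N + 1)) with (2 * S N)%nat by lia.
      rewrite pow_mult. replace ((-1) ^ 2) with 1 by ring. apply pow1. }
    assert (Hz : z (S (S (2 * N + 1))) = / 4 * z (S N)).
    { unfold z. rewrite !S_INR, plus_INR, mult_INR. simpl INR.
      assert (0 <= INR N) by apply pos_INR. field. lra. }
    assert (Ha : a (S (2 * N + 1)) = z (S (2 * N + 1))).
    { unfold a, z. rewrite Hev. unfold Rdiv. ring. }
    assert (Ha' : a (S (S (2 * N + 1))) = - z (S (S (2 * N + 1)))).
    { unfold a, z. rewrite <- tech_pow_Rmult, Hev. unfold Rdiv. ring. }
    rewrite Ha, Ha', Hz. unfold plus; simpl. lra.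
Qed.

Theorem alt_inv_sq_series : is_series (fun n => (-1) ^ n / (INR n + 1) ^ 2) (PI ^ 2 / 12).
Proof.
  set (a := fun n => (-1) ^ n / (INR n + 1) ^ 2).
  assert (Hex : ex_series a).
  { apply (@ex_series_le R_AbsRing R_CompleteNormedModule _ (fun n => / (INR n + 1) ^ 2)).
    - intros n. change (norm ?x) with (Rabs x). unfold a.
      assert (0 < (INR n + 1) ^ 2) by (apply pow_lt; pose proof (pos_INR n); lra).
      rewrite Rabs_div, Rabs_m1_pow, Rabs_pos_eq by lra. lra.
    - exists (PI ^ 2 / 6). apply basel. }
  assert (Hodd : filterlim (fun N => (2 * N + 1)%nat) eventually eventually).
  { apply eventually_subseq. intros; lia. }
  assert (H1 : filterlim (fun N => sum_n a (2 * N + 1)) eventually (locally (Series a))).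
  { apply (filterlim_comp _ _ _ _ _ _ _ _ Hodd), Series_correct, Hex. }
  assert (H2 : filterlim (fun N => sum_n a (2 * N + 1)) eventually
                 (locally (PI ^ 2 / 6 - / 2 * (PI ^ 2 / 6)))).
  { apply (filterlim_ext (fun N => sum_n (fun n => / (INR n + 1) ^ 2) (2 * N + 1)
                                   - / 2 * sum_n (fun n => / (INR n + 1) ^ 2) N)).
    { intros N. symmetry. apply alt_inv_sq_sum_odd. }
    apply (is_lim_seq_minus' _ _ (PI ^ 2 / 6) (/ 2 * (PI ^ 2 / 6))).
    - apply (filterlim_comp _ _ _ _ _ _ _ _ Hodd), basel.
    - apply (is_lim_seq_scal_l _ (/ 2) (PI ^ 2 / 6)), basel. }
  replace (PI ^ 2 / 12) with (Series a).
  - apply Series_correct, Hex.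
  - rewrite (filterlim_locally_unique _ _ _ H1 H2). field.
Qed.

Lemma inv_sq_domination (f : nat -> R) c :
  (forall n, Rabs (f n) <= c / (INR n + 1) ^ 2) ->
  ex_series f /\ Rabs (Series f) <= c * (PI ^ 2 / 6).
Proof.
  intros Hf.
  assert (Hc : is_series (fun n => c / (INR n + 1) ^ 2) (c * (PI ^ 2 / 6)))
    by exact (is_series_scal_l c _ _ basel).
  assert (Ha : ex_series (fun n => Rabs (f n))).
  { apply (@ex_series_le R_AbsRing R_CompleteNormedModule _ (fun n => c / (INR n + 1) ^ 2)).
    - intros n. change (norm ?x) with (Rabs x). rewrite Rabs_Rabsolu. apply Hf.
    - eexists; exact Hc. }
  split; [apply ex_series_Rabs, Ha|].
  apply (Rle_trans _ _ _ (Series_Rabs _ Ha)).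
  rewrite <- (is_series_unique _ _ Hc). apply Series_le.
  - intros n; split; [apply Rabs_pos | apply Hf].
  - eexists; exact Hc.
Qed.

(** * The partial-fraction series of pi / sin (pi x) *)

(* [pi_csc x] is the partial-fraction expansion of [π / sin (π x)]; [pf_coef] are the Taylor coefficients of [pf_sum]: [pf_coef (2 j) = 2 η (2 j + 2)] and
   the odd ones vanish. *)
Definition pf_term (x : R) (n : nat) : R := (-1) ^ n * 2 / ((INR n + 1) ^ 2 - x ^ 2).
Definition pf_sum (x : R) : R := Series (pf_term x).
Definition pi_csc (x : R) : R := 1 / x + x * pf_sum x.
Definition pf_coef_term (k n : nat) : R := (-1) ^ n * (1 + (-1) ^ k) / (INR n + 1) ^ (k + 2).
Definition pf_coef (k : nat) : R := Series (pf_coef_term k).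

Lemma pf_coef_0 : pf_coef 0 = PI ^ 2 / 6.
Proof.
  unfold pf_coef. rewrite (Series_ext _ (fun n => 2 * ((-1) ^ n / (INR n + 1) ^ 2))).
  - rewrite Series_scal_l, (is_series_unique _ _ alt_inv_sq_series). field.
  - intros n. unfold pf_coef_term. simpl. field. pose proof (pos_INR n). lra.
Qed.

Lemma pf_coef_term_bound k n : Rabs (pf_coef_term k n) <= 2 / (INR n + 1) ^ 2.
Proof.
  assert (Hm : 1 <= INR n + 1) by (pose proof (pos_INR n); lra).
  unfold pf_coef_term, Rdiv. rewrite !Rabs_mult, Rabs_m1_pow, Rmult_1_l, Rabs_inv.
  rewrite (Rabs_pos_eq ((INR n + 1) ^ (k + 2))) by (apply pow_le; lra).
  apply Rmult_le_compat; [apply Rabs_pos | left; apply Rinv_0_lt_compat, pow_lt; lra | |].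
  - apply (Rle_trans _ _ _ (Rabs_triang _ _)). rewrite Rabs_m1_pow, Rabs_R1. lra.
  - apply Rinv_le_contravar; [apply pow_lt; lra|]. rewrite pow_add.
    rewrite <- (Rmult_1_l ((INR n + 1) ^ 2)) at 1.
    apply Rmult_le_compat_r; [apply pow_le; lra | apply pow_R1_Rle; lra].
Qed.

Lemma pf_coef_bound k : Rabs (pf_coef k) <= PI ^ 2 / 3.
Proof.
  apply (Rle_trans _ _ _ (proj2 (inv_sq_domination _ 2 (pf_coef_term_bound k)))). lra.
Qed.

Lemma pf_coef_radius : Rbar_le 1 (CV_radius pf_coef).
Proof.
  apply (proj1 (CV_radius_bounded pf_coef)). exists (PI ^ 2 / 3).
  intros n. rewrite pow1, Rmult_1_r. apply pf_coef_bound.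
Qed.

Lemma pf_coef_term_geom x m k : 0 < m ->
  x ^ k * (1 + (-1) ^ k) / m ^ (k + 2) = / m ^ 2 * ((x / m) ^ k + (- (x / m)) ^ k).
Proof.
  intros Hm. replace (- (x / m)) with (-1 * (x / m)) by ring.
  rewrite Rpow_mult_distr. unfold Rdiv. rewrite Rpow_mult_distr, pow_inv, pow_add.
  field. repeat split; try apply pow_nonzero; lra.
Qed.

(* Expanding [2 / (m^2 - x^2) = m^-2 (1/(1 - x/m) + 1/(1 + x/m))] into two geometric series. *)
Lemma pf_geom_tail x m K : 0 <= x < 1 -> 1 <= m ->
  Rabs (2 / (m ^ 2 - x ^ 2) - sum_f_R0 (fun k => x ^ k * (1 + (-1) ^ k) / m ^ (k + 2)) K)
  <= 2 * x ^ S K / (1 - x) / m ^ 2.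
Proof.
  intros Hx Hm. set (r := x / m).
  assert (Hr : 0 <= r <= x).
  { unfold r. split; [apply Rdiv_le_0_compat; lra|].
    apply (Rmult_le_reg_r m); [lra|]. unfold Rdiv. rewrite Rmult_assoc, Rinv_l by lra. nra. }
  rewrite (sum_eq _ (fun k => (r ^ k + (- r) ^ k) * / m ^ 2)).
  2:{ intros i _. rewrite pf_coef_term_geom by lra. unfold r. ring. }
  rewrite <- scal_sum, plus_sum, !tech3 by lra.
  replace (2 / (m ^ 2 - x ^ 2) - (/ m ^ 2 * ((1 - r ^ S K) / (1 - r) + (1 - (- r) ^ S K) / (1 - - r))))
    with (/ m ^ 2 * (r ^ S K / (1 - r) + (- r) ^ S K / (1 + r)))
    by (unfold r; field; repeat split; try lra; simpl; nra).
  rewrite Rabs_mult, Rabs_inv, (Rabs_pos_eq (m ^ 2)) by (apply pow_le; lra).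
  rewrite Rmult_comm. unfold Rdiv at 3. apply Rmult_le_compat_r.
  { left; apply Rinv_0_lt_compat, pow_lt; lra. }
  apply (Rle_trans _ _ _ (Rabs_triang _ _)).
  assert (Hp : 0 <= r ^ S K <= x ^ S K) by (split; [apply pow_le; lra | apply pow_incr; lra]).
  assert (Hq : Rabs ((- r) ^ S K) = r ^ S K).
  { rewrite <- RPow_abs, Rabs_Ropp, Rabs_pos_eq by lra. reflexivity. }
  rewrite !Rabs_div, Hq, !(Rabs_pos_eq (r ^ S K)), !Rabs_pos_eq by lra.
  assert (r ^ S K / (1 + r) <= r ^ S K / (1 - r)).
  { unfold Rdiv. apply Rmult_le_compat_l; [lra|]. apply Rinv_le_contravar; lra. }
  assert (r ^ S K / (1 - r) <= x ^ S K / (1 - x)).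
  { unfold Rdiv. apply Rmult_le_compat; try lra.
    - left; apply Rinv_0_lt_compat; lra.
    - apply Rinv_le_contravar; lra. }
  lra.
Qed.

Lemma ex_series_pf_term x : 0 <= x < 1 -> ex_series (pf_term x).
Proof.
  intros Hx. apply (inv_sq_domination _ (2 / (1 - x ^ 2))). intros n.
  assert (Hm : 1 <= INR n + 1) by (pose proof (pos_INR n); lra).
  unfold pf_term. set (m := INR n + 1) in *.
  assert (Hx2 : x ^ 2 < 1) by (simpl; nra).
  assert (0 <= x * x * (m * m - 1)) by (apply Rmult_le_pos; nra).
  assert (Hd : m ^ 2 * (1 - x ^ 2) <= m ^ 2 - x ^ 2) by (simpl; nra).
  assert (0 < m ^ 2 * (1 - x ^ 2)) by (apply Rmult_lt_0_compat; [apply pow_lt|simpl]; nra).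
  unfold Rdiv. rewrite !Rabs_mult, Rabs_m1_pow, Rabs_inv, !Rabs_pos_eq by lra.
  replace (2 * / (1 - x ^ 2) * / m ^ 2) with (2 * / (m ^ 2 * (1 - x ^ 2)))
    by (field; split; lra).
  rewrite Rmult_1_l. apply Rmult_le_compat_l; [lra|]. apply Rinv_le_contravar; lra.
Qed.

Theorem is_pseries_pf_sum x : 0 <= x < 1 -> is_pseries pf_coef x (pf_sum x).
Proof.
  intros Hx.
  assert (Hex : forall k, ex_series (fun n => x ^ k * pf_coef_term k n)).
  { intros k. apply (inv_sq_domination _ 2). intros n.
    rewrite Rabs_mult, <- RPow_abs, <- (Rmult_1_l (2 / _)).
    apply Rmult_le_compat; [apply pow_le, Rabs_pos | apply Rabs_pos | | apply pf_coef_term_bound].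
    rewrite <- (pow1 k). apply pow_incr. rewrite Rabs_pos_eq; lra. }
  set (P := fun K => Series (fun n => sum_f_R0 (fun k => x ^ k * pf_coef_term k n) K)).
  assert (Hpart : forall K, sum_n (fun k => scal (pow_n x k) (pf_coef k)) K = P K).
  { intros K. rewrite sum_n_Reals. unfold P. rewrite <- (proj1 (sum_f_R0_Series _ K Hex)).
    apply sum_eq. intros i _. rewrite Series_scal_l, pow_n_pow. reflexivity. }
  assert (Hdiff : forall K, Rabs (pf_sum x - P K) <= 2 * x ^ S K / (1 - x) * (PI ^ 2 / 6)).
  { intros K. unfold pf_sum, P.
    rewrite <- Series_minus by (apply ex_series_pf_term, Hx || apply (sum_f_R0_Series _ K Hex)).
    apply inv_sq_domination. intros n.
    assert (Hm : 1 <= INR n + 1) by (pose proof (pos_INR n); lra).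
    replace (pf_term x n - sum_f_R0 (fun k => x ^ k * pf_coef_term k n) K) with
      ((-1) ^ n * (2 / ((INR n + 1) ^ 2 - x ^ 2)
                   - sum_f_R0 (fun k => x ^ k * (1 + (-1) ^ k) / (INR n + 1) ^ (k + 2)) K)).
    - rewrite Rabs_mult, Rabs_m1_pow, Rmult_1_l. apply pf_geom_tail; assumption.
    - unfold pf_term, pf_coef_term. rewrite Rmult_minus_distr_l, scal_sum. f_equal.
      + unfold Rdiv; ring.
      + apply sum_eq. intros i _. unfold Rdiv. ring. }
  unfold is_pseries, is_series. apply (filterlim_ext (fun K => pf_sum x - (pf_sum x - P K))).
  { intros K. rewrite Hpart. ring. }
  enough (L : is_lim_seq (fun K => pf_sum x - (pf_sum x - P K)) (pf_sum x - 0))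
    by (rewrite Rminus_0_r in L; exact L).
  apply (is_lim_seq_minus' _ _ _ _ (is_lim_seq_const _)), is_lim_seq_abs_0.
  apply (is_lim_seq_le_le (fun _ => 0) _ (fun K => 2 * x / (1 - x) * (PI ^ 2 / 6) * x ^ K)).
  - intros K. split; [apply Rabs_pos|]. apply (Rle_trans _ _ _ (Hdiff K)). simpl. right. field. lra.
  - apply is_lim_seq_const.
  - replace (Finite 0) with (Rbar_mult (2 * x / (1 - x) * (PI ^ 2 / 6)) 0) by (simpl; f_equal; ring).
    apply is_lim_seq_scal_l, is_lim_seq_geom. rewrite Rabs_pos_eq; lra.
Qed.

Definition pf_coef2 (k : nat) : R := 2 ^ k * pf_coef k.

Lemma is_pseries_pf_sum_2 e : 0 <= e < 1 / 2 -> is_pseries pf_coef2 e (pf_sum (2 * e)).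
Proof.
  intros He. apply (is_series_ext (fun k => scal (pow_n (2 * e) k) (pf_coef k))).
  - intros n. unfold pf_coef2, scal; simpl; unfold mult; simpl.
    rewrite !pow_n_pow, Rpow_mult_distr, <- Rmult_assoc. f_equal. apply Rmult_comm.
  - apply is_pseries_pf_sum. lra.
Qed.

Lemma pf_coef2_radius : Rbar_le (1 / 2) (CV_radius pf_coef2).
Proof.
  apply (proj1 (CV_radius_bounded pf_coef2)). exists (PI ^ 2 / 3). intros n. unfold pf_coef2.
  replace (2 ^ n * pf_coef n * (1 / 2) ^ n) with (pf_coef n * (2 * (1 / 2)) ^ n)
    by (rewrite Rpow_mult_distr; ring).
  replace (2 * (1 / 2)) with 1 by field. rewrite pow1, Rmult_1_r. apply pf_coef_bound.
Qed.

Lemma lim_pf_sum_scaled k : 0 < k ->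
  filterlim (fun e => pf_sum (k * e)) (at_right 0) (locally (PI ^ 2 / 6)).
Proof.
  intros Hk.
  assert (Hc : continuous (fun e => PSeries pf_coef (k * e)) 0).
  { apply (continuous_comp (fun e => k * e) (PSeries pf_coef)).
    - apply (@ex_derive_continuous R_AbsRing R_NormedModule). auto_derive. auto.
    - rewrite Rmult_0_r. apply continuity_pt_filterlim, PSeries_continuity.
      apply (Rabs_lt_CV_radius _ 1); [apply pf_coef_radius | lra]. }
  apply filterlim_at_right_of_continuous in Hc.
  rewrite Rmult_0_r, PSeries_0, pf_coef_0 in Hc.
  apply (filterlim_ext_loc (fun e => PSeries pf_coef (k * e))); [|exact Hc].
  apply (filter_imp (fun e => 0 < e < 1 / k)); [|apply at_right_0_lt, Rdiv_lt_0_compat; lra].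
  intros e He. apply is_pseries_unique, is_pseries_pf_sum.
  split; [nra|]. apply (Rmult_lt_reg_r (/ k)); [apply Rinv_0_lt_compat; lra|].
  rewrite Rmult_1_l, (Rmult_comm k), Rmult_assoc, Rinv_r by lra. lra.
Qed.

Lemma lim_pf_sum : filterlim pf_sum (at_right 0) (locally (PI ^ 2 / 6)).
Proof.
  apply (filterlim_ext (fun e => pf_sum (1 * e))); [intros; now rewrite Rmult_1_l|].
  apply lim_pf_sum_scaled, Rlt_0_1.
Qed.

(** * The integral of y^-eps / (y + c) over (0, +oo) *)

Lemma continuous_Rpower_div t q c : 0 < t -> 0 <= c -> continuous (fun t => Rpower t q / (t + c)) t.
Proof.
  intros Ht Hc. apply (continuous_mult (fun t => Rpower t q) (fun t => / (t + c))).
  - apply (@ex_derive_continuous R_AbsRing R_NormedModule). eexists. apply is_derive_Rpower, Ht.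
  - apply (@ex_derive_continuous R_AbsRing R_NormedModule). auto_derive. lra.
Qed.

Lemma ex_RInt_Rpower_div a b q c : 0 < a -> 0 < b -> 0 <= c ->
  ex_RInt (fun t => Rpower t q / (t + c)) a b.
Proof.
  intros Ha Hb Hc. apply (@ex_RInt_continuous R_CompleteNormedModule). intros z Hz.
  apply continuous_Rpower_div; [|lra]. assert (0 < Rmin a b) by (apply Rmin_glb_lt; lra). lra.
Qed.

Lemma is_RInt_Rpower a q : 0 < a -> 0 < q + 1 ->
  is_RInt (fun t => Rpower t q) a 1 ((1 - Rpower a (q + 1)) / (q + 1)).
Proof.
  intros Ha Hq.
  replace ((1 - Rpower a (q + 1)) / (q + 1))
    with (Rpower 1 (q + 1) / (q + 1) - Rpower a (q + 1) / (q + 1))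
    by (rewrite Rpower_1_l; field; lra).
  apply (is_RInt_derive (fun t => Rpower t (q + 1) / (q + 1))); intros x Hx;
    assert (0 < x) by (assert (0 < Rmin a 1) by (apply Rmin_glb_lt; lra); lra).
  - apply (is_derive_ext (fun t => / (q + 1) * Rpower t (q + 1))); [intros; simpl; field; lra|].
    replace (Rpower x q) with (/ (q + 1) * ((q + 1) * Rpower x (q + 1 - 1)))
      by (replace (q + 1 - 1) with q by ring; field; lra).
    apply (is_derive_scal (fun t => Rpower t (q + 1))), is_derive_Rpower. lra.
  - apply (@ex_derive_continuous R_AbsRing R_NormedModule). eexists. apply is_derive_Rpower. lra.
Qed.

Definition mellin_kernel (p t : R) : R := Rpower t p / (t + 1).

Lemma mellin_kernel_expand p N t : 0 < t ->
  mellin_kernel p t = sum_f_R0 (fun n => (-1) ^ n * Rpower t (INR n + p)) N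
             + (-1) ^ S N * (Rpower t (INR (S N) + p) / (t + 1)).
Proof.
  intros Ht. induction N as [|N IH].
  - unfold mellin_kernel. rewrite Rpower_S_plus by lra. simpl. rewrite Rplus_0_l. field. lra.
  - rewrite IH, tech5, (Rpower_S_plus t (S N)) by lra.
    rewrite <- (tech_pow_Rmult _ (S N)). field. lra.
Qed.

Lemma is_RInt_alt_Rpower_sum p N a : 0 < a -> -1 < p ->
  is_RInt (fun t => sum_f_R0 (fun n => (-1) ^ n * Rpower t (INR n + p)) N) a 1
    (sum_f_R0 (fun n => (-1) ^ n * ((1 - Rpower a (INR n + p + 1)) / (INR n + p + 1))) N).
Proof.
  intros Ha Hp. induction N as [|N IH].
  - apply (is_RInt_scal (fun t => Rpower t (0 + p))), is_RInt_Rpower; simpl; lra.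
  - change (sum_f_R0 ?f (S N)) with (sum_f_R0 f N + f (S N)). cbv beta.
    apply (is_RInt_plus (fun t => sum_f_R0 (fun n => (-1) ^ n * Rpower t (INR n + p)) N)
             (fun t => (-1) ^ S N * Rpower t (INR (S N) + p))); [exact IH|].
    apply (is_RInt_scal (fun t => Rpower t (INR (S N) + p))), is_RInt_Rpower; [lra|].
    pose proof (pos_INR (S N)). lra.
Qed.

Lemma alt_Rpower_sum_bound a p N : 0 < a < 1 -> -1 < p ->
  Rabs (sum_f_R0 (fun n => (-1) ^ n * (Rpower a (INR n + p + 1) / (INR n + p + 1))) N)
  <= Rpower a (p + 1) / ((p + 1) * (1 - a)).
Proof.
  intros Ha Hp. apply (Rle_trans _ _ _ (Rsum_abs _ _)).
  apply (Rle_trans _ (sum_f_R0 (fun n => a ^ n * (Rpower a (p + 1) / (p + 1))) N)).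
  - apply sum_Rle. intros n _. rewrite Rabs_mult, Rabs_m1_pow, Rmult_1_l.
    assert (0 <= INR n) by apply pos_INR. pose proof (Rpower_pos a (p + 1)).
    replace (INR n + p + 1) with (INR n + (p + 1)) by ring.
    rewrite Rpower_plus, Rpower_pow by lra.
    assert (0 <= a ^ n) by (apply pow_le; lra).
    rewrite Rabs_pos_eq by (apply Rdiv_le_0_compat; [apply Rmult_le_pos|]; lra).
    unfold Rdiv. rewrite Rmult_assoc. apply Rmult_le_compat_l; [lra|].
    apply Rmult_le_compat_l; [lra|]. apply Rinv_le_contravar; lra.
  - rewrite <- scal_sum, tech3 by lra. pose proof (Rpower_pos a (p + 1)).
    assert (0 <= a ^ S N) by (apply pow_le; lra).
    replace (Rpower a (p + 1) / ((p + 1) * (1 - a)))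
      with (Rpower a (p + 1) / (p + 1) * (1 / (1 - a))) by (field; lra).
    apply Rmult_le_compat_l; [apply Rdiv_le_0_compat; lra|].
    unfold Rdiv. apply Rmult_le_compat_r; [left; apply Rinv_0_lt_compat|]; lra.
Qed.

Lemma RInt_Rpower_div_succ_bounds a q : 0 < a < 1 -> 0 < q + 1 ->
  0 <= RInt (fun t => Rpower t q / (t + 1)) a 1 <= 1 / (q + 1).
Proof.
  intros Ha Hq.
  assert (HI : is_RInt (fun t => Rpower t q / (t + 1)) a 1 (RInt (fun t => Rpower t q / (t + 1)) a 1))
    by (apply (@RInt_correct R_CompleteNormedModule), ex_RInt_Rpower_div; lra).
  split.
  - apply (is_RInt_le (fun _ => 0) (fun t => Rpower t q / (t + 1)) a 1 0 _);
      [lra | apply is_RInt_R_zero | exact HI |].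
    intros x Hx. apply Rdiv_le_0_compat; [left; apply Rpower_pos | lra].
  - apply (Rle_trans _ ((1 - Rpower a (q + 1)) / (q + 1))).
    + apply (is_RInt_le (fun t => Rpower t q / (t + 1)) (fun t => Rpower t q) a 1);
        [lra | exact HI | apply is_RInt_Rpower; lra |].
      intros x Hx. pose proof (Rpower_pos x q). unfold Rdiv.
      rewrite <- (Rmult_1_r (Rpower x q)) at 2. apply Rmult_le_compat_l; [lra|].
      rewrite <- Rinv_1. apply Rinv_le_contravar; lra.
    + pose proof (Rpower_pos a (q + 1)). unfold Rdiv.
      apply Rmult_le_compat_r; [left; apply Rinv_0_lt_compat|]; lra.
Qed.

Lemma RInt_mellin_kernel_approx p N a : -1 < p -> 0 < a < 1 ->
  Rabs (RInt (mellin_kernel p) a 1 - sum_f_R0 (fun n => (-1) ^ n / (INR n + 1 + p)) N)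
  <= 1 / (INR N + 2 + p) + Rpower a (p + 1) / ((p + 1) * (1 - a)).
Proof.
  intros Hp Ha. set (q := INR (S N) + p).
  assert (Hq : 0 < q + 1) by (unfold q; pose proof (pos_INR (S N)); lra).
  set (Rem := RInt (fun t => Rpower t q / (t + 1)) a 1).
  assert (HRem : is_RInt (fun t => Rpower t q / (t + 1)) a 1 Rem)
    by (apply (@RInt_correct R_CompleteNormedModule), ex_RInt_Rpower_div; lra).
  set (S1 := sum_f_R0 (fun n => (-1) ^ n / (INR n + 1 + p)) N).
  set (S2 := sum_f_R0 (fun n => (-1) ^ n * (Rpower a (INR n + p + 1) / (INR n + p + 1))) N).
  assert (Hsum : is_RInt (fun t => sum_f_R0 (fun n => (-1) ^ n * Rpower t (INR n + p)) N) a 1 (S1 - S2)).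
  { replace (S1 - S2) with
      (sum_f_R0 (fun n => (-1) ^ n * ((1 - Rpower a (INR n + p + 1)) / (INR n + p + 1))) N).
    - apply is_RInt_alt_Rpower_sum; lra.
    - unfold S1, S2. rewrite <- minus_sum. apply sum_eq. intros i _.
      assert (0 <= INR i) by apply pos_INR.
      replace (INR i + 1 + p) with (INR i + p + 1) by ring. field. lra. }
  assert (Hkern : is_RInt (mellin_kernel p) a 1 (S1 - S2 + (-1) ^ S N * Rem)).
  { apply (is_RInt_ext (fun t => sum_f_R0 (fun n => (-1) ^ n * Rpower t (INR n + p)) N
                                 + (-1) ^ S N * (Rpower t q / (t + 1)))).
    - intros x Hx. rewrite Rmin_left in Hx by lra. symmetry. apply mellin_kernel_expand. lra.
    - apply (is_RInt_plus (fun t => sum_f_R0 (fun n => (-1) ^ n * Rpower t (INR n + p)) N)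
               (fun t => (-1) ^ S N * (Rpower t q / (t + 1)))); [exact Hsum|].
      apply (is_RInt_scal (fun t => Rpower t q / (t + 1))). exact HRem. }
  rewrite (is_RInt_unique _ _ _ _ Hkern).
  replace (S1 - S2 + (-1) ^ S N * Rem - S1) with ((-1) ^ S N * Rem + - S2) by ring.
  apply (Rle_trans _ _ _ (Rabs_triang _ _)). rewrite Rabs_Ropp, Rabs_mult, Rabs_m1_pow, Rmult_1_l.
  assert (HR := RInt_Rpower_div_succ_bounds a q Ha Hq). fold Rem in HR.
  replace (INR N + 2 + p) with (q + 1) by (unfold q; rewrite S_INR; ring).
  rewrite Rabs_pos_eq by lra. apply Rplus_le_compat; [lra | apply alt_Rpower_sum_bound; lra].
Qed.

Lemma RInt_mellin_kernel_inv eps b : 0 < eps -> 1 < b ->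
  RInt (mellin_kernel (- eps)) 1 b = RInt (mellin_kernel (eps - 1)) (/ b) 1.
Proof.
  intros He Hb.
  assert (Hb' : 0 < / b < 1)
    by (split; [apply Rinv_0_lt_compat | rewrite <- Rinv_1; apply Rinv_lt_contravar]; lra).
  assert (Hpos : forall x, Rmin (/ b) 1 <= x <= Rmax (/ b) 1 -> 0 < x)
    by (intros x Hx; rewrite Rmin_left in Hx; lra).
  assert (H : is_RInt (fun y => scal (- / y ^ 2) (mellin_kernel (- eps) (/ y))) (/ b) 1
                (RInt (mellin_kernel (- eps)) b 1)).
  { rewrite <- (Rinv_inv b) at 2. rewrite <- Rinv_1 at 2.
    apply (is_RInt_comp (mellin_kernel (- eps)) (fun y => / y) (fun y => - / y ^ 2)).
    - intros x Hx. apply continuous_Rpower_div; [apply Rinv_0_lt_compat, Hpos, Hx | lra].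
    - intros x Hx. pose proof (Hpos x Hx). split.
      + auto_derive; [lra | field; lra].
      + apply (@ex_derive_continuous R_AbsRing R_NormedModule). auto_derive. intro. nra. }
  apply is_RInt_opp, (is_RInt_ext _ (mellin_kernel (eps - 1))),
    (@is_RInt_unique R_CompleteNormedModule) in H.
  - rewrite H. symmetry. apply (@opp_RInt_swap R_CompleteNormedModule), ex_RInt_Rpower_div; lra.
  - intros x Hx. rewrite Rmin_left in Hx by lra.
    unfold mellin_kernel, scal; simpl; unfold mult, opp; simpl.
    rewrite Rpower_inv by lra. replace (- - eps) with (1 + (eps - 1)) by ring.
    rewrite Rpower_plus, Rpower_1 by lra. field. lra.
Qed.

Lemma alt_partial_fractions eps N : 0 < eps < 1 ->
  sum_f_R0 (fun n => (-1) ^ n / (INR n + 1 + - eps)) N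
  + sum_f_R0 (fun n => (-1) ^ n / (INR n + 1 + (eps - 1))) (S N)
  = 1 / eps + eps * sum_f_R0 (pf_term eps) N.
Proof.
  intros He. induction N as [|N IH].
  - simpl. unfold pf_term. simpl. field. repeat split; try lra. nra.
  - rewrite (tech5 (pf_term eps) N), Rmult_plus_distr_l, <- Rplus_assoc, <- IH.
    rewrite (tech5 _ (S N)), !tech5. unfold pf_term. rewrite !S_INR.
    assert (0 <= INR N) by apply pos_INR.
    rewrite <- !tech_pow_Rmult. field. repeat split; try lra. nra.
Qed.

(* Split at 1, map [1, b] onto [1/b, 1] by [t -> 1/t], and expand both pieces
   into alternating series; their sum is [pi_csc eps]. *)
Lemma RInt_mellin_kernel_pi_csc eps a b : 0 < eps < 1 -> 0 < a < 1 -> 1 < b ->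
  Rabs (RInt (mellin_kernel (- eps)) a b - pi_csc eps)
  <= Rpower a (1 - eps) / ((1 - eps) * (1 - a)) + Rpower (/ b) eps / (eps * (1 - / b)).
Proof.
  intros He Ha Hb.
  assert (Hb' : 0 < / b < 1)
    by (split; [apply Rinv_0_lt_compat | rewrite <- Rinv_1; apply Rinv_lt_contravar]; lra).
  rewrite <- (RInt_Chasles (V := R_CompleteNormedModule) _ a 1 b) by (apply ex_RInt_Rpower_div; lra).
  rewrite RInt_mellin_kernel_inv by lra.
  set (I1 := RInt (mellin_kernel (- eps)) a 1). set (I2 := RInt (mellin_kernel (eps - 1)) (/ b) 1).
  apply (Rle_of_le_plus_lim _ _ (fun N => 1 / (INR N + 2 + - eps) + 1 / (INR (S N) + 2 + (eps - 1))
                                          + eps * Rabs (sum_f_R0 (pf_term eps) N - pf_sum eps))).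
  - intros N.
    assert (H1 := RInt_mellin_kernel_approx (- eps) N a ltac:(lra) Ha).
    assert (H2 := RInt_mellin_kernel_approx (eps - 1) (S N) (/ b) ltac:(lra) Hb').
    assert (HT := alt_partial_fractions eps N He).
    fold I1 in H1. fold I2 in H2.
    replace (- eps + 1) with (1 - eps) in H1 by ring.
    replace (eps - 1 + 1) with eps in H2 by ring.
    set (T1 := sum_f_R0 (fun n => (-1) ^ n / (INR n + 1 + - eps)) N) in *.
    set (T2 := sum_f_R0 (fun n => (-1) ^ n / (INR n + 1 + (eps - 1))) (S N)) in *.
    set (Sb := sum_f_R0 (pf_term eps) N) in *.
    replace (plus I1 I2 - pi_csc eps) with ((I1 - T1) + (I2 - T2) + eps * (Sb - pf_sum eps))
      by (unfold pi_csc, plus; simpl; lra).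
    apply (Rle_trans _ _ _ (Rabs_triang _ _)).
    apply (Rle_trans _ _ _ (Rplus_le_compat_r _ _ _ (Rabs_triang _ _))).
    rewrite Rabs_mult, (Rabs_pos_eq eps) by lra. lra.
  - replace (Finite 0) with (Finite (0 + 0 + eps * 0)) by (f_equal; ring).
    apply is_lim_seq_plus'; [apply is_lim_seq_plus'|].
    + apply (is_lim_seq_ext (fun N => 1 / (INR N + (2 - eps)))); [intros; f_equal; ring|].
      apply is_lim_seq_inv_INR_plus. lra.
    + apply (is_lim_seq_ext (fun N => 1 / (INR N + (2 + eps)))); [intros; rewrite S_INR; f_equal; ring|].
      apply is_lim_seq_inv_INR_plus. lra.
    + apply (is_lim_seq_scal_l _ eps 0), (proj1 (is_lim_seq_abs_0 _)).
      apply (is_lim_seq_ext (fun N => sum_n (pf_term eps) N - pf_sum eps)).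
      { intros; now rewrite sum_n_Reals. }
      rewrite <- (Rminus_eq_0 (pf_sum eps)).
      apply is_lim_seq_minus'; [|apply is_lim_seq_const].
      apply Series_correct, ex_series_pf_term. lra.
Qed.

Lemma Rpower_div_small q d : 0 < q -> 0 < d ->
  exists x0, 0 < x0 <= 1 / 2 /\ forall x, 0 < x < x0 -> Rpower x q / (q * (1 - x)) < d.
Proof.
  intros Hq Hd. set (y := Rpower (q * d / 2) (/ q)).
  assert (Hy : Rpower y q = q * d / 2).
  { unfold y. rewrite Rpower_mult, Rinv_l, Rpower_1 by nra. reflexivity. }
  exists (Rmin y (1 / 2)). split; [split; [apply Rmin_glb_lt; [apply Rpower_pos | lra] | apply Rmin_r]|].
  intros x Hx. assert (Hm1 := Rmin_l y (1 / 2)). assert (Hm2 := Rmin_r y (1 / 2)).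
  assert (Hxq : Rpower x q < q * d / 2) by (rewrite <- Hy; apply Rlt_Rpower_l; lra).
  pose proof (Rpower_pos x q).
  apply (Rle_lt_trans _ (Rpower x q / (q / 2))).
  - unfold Rdiv. apply Rmult_le_compat_l; [lra|]. apply Rinv_le_contravar; nra.
  - apply (Rmult_lt_reg_r (q / 2)); [lra|]. unfold Rdiv at 1. rewrite Rmult_assoc, Rinv_l by lra. lra.
Qed.

Lemma RInt_mellin_kernel_lim eps eta : 0 < eps < 1 -> 0 < eta ->
  exists a0 b0, 0 < a0 /\ 0 < b0 /\ forall a b, 0 < a < a0 -> b0 < b ->
    Rabs (RInt (mellin_kernel (- eps)) a b - pi_csc eps) < eta.
Proof.
  intros He Heta.
  destruct (Rpower_div_small (1 - eps) (eta / 2)) as [xa [Hxa Pa]]; [lra .. |].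
  destruct (Rpower_div_small eps (eta / 2)) as [xb [Hxb Pb]]; [lra .. |].
  exists xa, (/ xb). split; [lra | split; [apply Rinv_0_lt_compat; lra|]].
  intros a b Ha Hb.
  assert (Hb1 : 2 <= / xb) by (replace 2 with (/ (1 / 2)) by field; apply Rinv_le_contravar; lra).
  assert (Hib : 0 < / b < xb).
  { split; [apply Rinv_0_lt_compat; lra|].
    rewrite <- (Rinv_inv xb). apply Rinv_lt_contravar; [nra | lra]. }
  apply (Rle_lt_trans _ _ _ (RInt_mellin_kernel_pi_csc eps a b He ltac:(lra) ltac:(lra))).
  specialize (Pa a Ha). specialize (Pb (/ b) Hib). lra.
Qed.

Lemma RInt_Rpower_div_scale eps c a b : 0 < c -> 0 < a -> 0 < b ->
  RInt (fun y => Rpower y (- eps) / (y + c)) a b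
  = Rpower c (- eps) * RInt (mellin_kernel (- eps)) (a / c) (b / c).
Proof.
  intros Hc Ha Hb.
  assert (Hl : is_RInt (mellin_kernel (- eps)) (/ c * a + 0) (/ c * b + 0)
                (RInt (mellin_kernel (- eps)) (a / c) (b / c))).
  { replace (/ c * a + 0) with (a / c) by (unfold Rdiv; ring).
    replace (/ c * b + 0) with (b / c) by (unfold Rdiv; ring).
    apply (@RInt_correct R_CompleteNormedModule), ex_RInt_Rpower_div; try apply Rdiv_lt_0_compat; lra. }
  apply is_RInt_comp_lin, (is_RInt_ext _ (fun y => Rpower c eps * (Rpower y (- eps) / (y + c)))) in Hl.
  - apply (@is_RInt_unique R_CompleteNormedModule) in Hl.
    rewrite (RInt_scal (V := R_CompleteNormedModule)) in Hl by (apply ex_RInt_Rpower_div; lra).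
    unfold scal in Hl; simpl in Hl; unfold mult in Hl; simpl in Hl. rewrite <- Hl, <- Rmult_assoc.
    rewrite <- Rpower_plus, Rplus_opp_l, Rpower_O, Rmult_1_l by lra. reflexivity.
  - intros x Hx. assert (0 < x) by (assert (0 < Rmin a b) by (apply Rmin_glb_lt; lra); lra).
    unfold mellin_kernel, scal; simpl; unfold mult; simpl.
    replace (/ c * x + 0) with (x * / c) by ring.
    rewrite <- Rpower_mult_distr, Rpower_inv, Ropp_involutive by (try apply Rinv_0_lt_compat; lra).
    field. lra.
Qed.

Lemma is_RInt_gen_of_lim (f : R -> R) L :
  (forall a b, 0 < a -> 0 < b -> ex_RInt f a b) ->
  (forall eta, 0 < eta -> exists a0 b0, 0 < a0 /\
     forall a b, 0 < a < a0 -> b0 < b -> Rabs (RInt f a b - L) < eta) ->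
  is_RInt_gen f (at_right 0) (Rbar_locally p_infty) L.
Proof.
  intros Hex Hlim P [eta HP].
  destruct (Hlim eta (cond_pos eta)) as [a0 [b0 [Ha0 Hab]]].
  apply (Filter_prod _ _ _ (fun a => 0 < a < a0) (fun b => Rmax b0 1 < b)).
  - apply at_right_0_lt, Ha0.
  - exists (Rmax b0 1). auto.
  - intros a b Ha Hb. assert (Hm1 := Rmax_l b0 1). assert (Hm2 := Rmax_r b0 1).
    exists (RInt f a b). split.
    + apply (@RInt_correct R_CompleteNormedModule), Hex; lra.
    + apply HP, Hab; lra.
Qed.

Theorem is_RInt_gen_phi_dot eps c : 0 < eps < 1 -> 0 < c ->
  is_RInt_gen (fun y => Rpower y (- eps) / (y + c)) (at_right 0) (Rbar_locally p_infty)
    (Rpower c (- eps) * pi_csc eps).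
Proof.
  intros He Hc. apply is_RInt_gen_of_lim; [intros; apply ex_RInt_Rpower_div; lra|].
  intros eta Heta. set (K := Rpower c (- eps)). assert (HK : 0 < K) by apply Rpower_pos.
  destruct (RInt_mellin_kernel_lim eps (eta / K) He) as [a0 [b0 [Ha0 [Hb0 Hab]]]].
  { apply Rdiv_lt_0_compat; lra. }
  exists (c * a0), (c * b0). split; [nra|]. intros a b Ha Hb.
  assert (Hb' : 0 < b) by nra.
  rewrite RInt_Rpower_div_scale by lra. fold K.
  rewrite <- Rmult_minus_distr_l, Rabs_mult, (Rabs_pos_eq K) by lra.
  apply (Rmult_lt_reg_r (/ K)); [apply Rinv_0_lt_compat; lra|].
  rewrite Rmult_comm, <- Rmult_assoc, Rinv_l, Rmult_1_l by lra.
  apply Hab.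
  - split; [apply Rdiv_lt_0_compat | apply (Rmult_lt_reg_l c); [|unfold Rdiv; field_simplify]]; lra.
  - apply (Rmult_lt_reg_l c); [lra|]. unfold Rdiv. field_simplify; lra.
Qed.

Lemma phi_dot_eq e c : 0 < e < 1 -> 0 < c -> phi_dot e c = Rpower c (- e) * pi_csc e.
Proof. intros. apply is_RInt_gen_unique, is_RInt_gen_phi_dot; assumption. Qed.

Lemma phi_dot_RInt_gen e c : 0 < e < 1 -> 0 < c ->
  RInt_gen (fun y => Rpower y (- e) / (y + c)) (at_right 0) (Rbar_locally p_infty)
  = Rpower c (- e) * pi_csc e.
Proof. apply phi_dot_eq. Qed.

Lemma phi_l2_eq e c : 0 < e < 1 / 2 -> 0 < c ->
  phi_l2 e c = pi_csc e * (Rpower c (- (2 * e)) * pi_csc (2 * e)).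
Proof.
  intros He Hc. unfold phi_l2, int0inf. apply is_RInt_gen_unique.
  apply (is_RInt_gen_ext (fun y => scal (pi_csc e) (Rpower y (- (2 * e)) / (y + c)))).
  - apply (Filter_prod _ _ _ (fun a => 0 < a) (fun b => 0 < b)).
    + apply at_right_0_pos.
    + exists 0. intros x Hx. exact Hx.
    + intros a b Ha Hb x Hx. simpl in Hx.
      assert (0 < x) by (assert (0 < Rmin a b) by (apply Rmin_glb_lt; lra); lra).
      rewrite phi_dot_RInt_gen by lra.
      unfold scal; simpl; unfold mult; simpl.
      replace (- (2 * e)) with (- e + - e) by ring. rewrite Rpower_plus. field. lra.
  - assert (H := is_RInt_gen_phi_dot (2 * e) c ltac:(lra) Hc).
    apply (is_RInt_gen_scal _ (pi_csc e)) in H. exact H.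
Qed.

(** * Uniqueness of principal parts *)

Lemma principal_sum_0 a e : principal_sum 0 a e = 0.
Proof. reflexivity. Qed.

Lemma principal_sum_S N a e : e <> 0 ->
  principal_sum (S N) a e = (a 0%nat + principal_sum N (fun k => a (S k)) e) / e.
Proof.
  intros He. unfold principal_sum.
  change (seq 0 (S N)) with (0%nat :: seq 1 N).
  rewrite <- seq_shift. cbn [map fold_right]. rewrite map_map.
  assert (Hscal : forall l : list nat,
    fold_right Rplus 0 (map (fun k => a (S k) / e ^ S (S k)) l)
    = / e * fold_right Rplus 0 (map (fun k => a (S k) / e ^ S k) l)).
  { induction l as [|k l IH]; cbn [map fold_right]; [ring|].
    rewrite IH. change (e ^ S (S k)) with (e * e ^ S k). field. split; [apply pow_nonzero|]; auto. }
  rewrite Hscal. simpl. field. auto.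
Qed.

Definition bounded_near_0 (f : R -> R) : Prop := exists K, at_right 0 (fun e => Rabs (f e) <= K).

Lemma bounded_near_0_minus f g :
  bounded_near_0 f -> bounded_near_0 g -> bounded_near_0 (fun e => f e - g e).
Proof.
  intros [K HK] [L HL]. exists (K + L).
  apply (filter_imp (fun e => Rabs (f e) <= K /\ Rabs (g e) <= L)); [|exact (filter_and _ _ HK HL)].
  intros e [Hf Hg]. unfold Rminus. apply (Rle_trans _ _ _ (Rabs_triang _ _)). rewrite Rabs_Ropp. lra.
Qed.

Lemma bounded_near_0_ext f g : (forall e, 0 < e -> f e = g e) -> bounded_near_0 f -> bounded_near_0 g.
Proof.
  intros H [K HK]. exists K.
  apply (filter_imp (fun e => Rabs (f e) <= K /\ 0 < e)); [|apply (filter_and _ _ HK), at_right_0_pos].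
  intros e [Hf He]. rewrite <- H; assumption.
Qed.

Lemma eq_0_of_small c K : at_right 0 (fun e => Rabs c <= K * e) -> c = 0.
Proof.
  intros H. destruct (Req_dec c 0) as [|Hc]; [assumption|]. exfalso.
  assert (Hc' : 0 < Rabs c) by (apply Rabs_pos_lt, Hc).
  assert (HK : 0 < Rabs K + 1) by (pose proof (Rabs_pos K); lra).
  assert (Hsmall := at_right_0_lt (Rabs c / (Rabs K + 1)) ltac:(apply Rdiv_lt_0_compat; lra)).
  destruct (@filter_ex _ _ (at_right_proper_filter 0) _ (filter_and _ _ H Hsmall))
    as [e [He [He0 He1]]].
  assert (K * e <= Rabs K * e) by (apply Rmult_le_compat_r; [lra | apply Rle_abs]).
  assert (Rabs K * e < Rabs c).
  { apply (Rle_lt_trans _ (Rabs K * (Rabs c / (Rabs K + 1)))).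
    - apply Rmult_le_compat_l; [apply Rabs_pos | lra].
    - apply (Rmult_lt_reg_r (Rabs K + 1)); [lra|]. field_simplify; lra. }
  lra.
Qed.

(* The inductive step for [(c + f e) / e], where [f] is a shorter principal part. *)
Lemma bounded_div_step c (f : R -> R) :
  bounded_near_0 (fun e => (c + f e) / e) ->
  (bounded_near_0 f -> forall e, 0 < e -> f e = 0) ->
  c = 0 /\ forall e, 0 < e -> f e = 0.
Proof.
  intros [K HK] IH.
  assert (Hmul : at_right 0 (fun e => Rabs (c + f e) <= K * e)).
  { apply (filter_imp (fun e => Rabs ((c + f e) / e) <= K /\ 0 < e)).
    - intros e [H He]. replace (c + f e) with ((c + f e) / e * e) by (field; lra).
      rewrite Rabs_mult, (Rabs_pos_eq e) by lra. apply Rmult_le_compat_r; lra.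
    - apply (filter_and _ _ HK), at_right_0_pos. }
  assert (Hf : forall e, 0 < e -> f e = 0).
  { apply IH. exists (Rabs c + Rabs K).
    apply (filter_imp (fun e => Rabs (c + f e) <= K * e /\ 0 < e < 1)).
    - intros e [H He]. replace (f e) with ((c + f e) + - c) by ring.
      apply (Rle_trans _ _ _ (Rabs_triang _ _)). rewrite Rabs_Ropp.
      assert (K * e <= Rabs K) by (pose proof (Rle_abs K); pose proof (Rabs_pos K); nra). lra.
    - apply (filter_and _ _ Hmul), at_right_0_lt. lra. }
  split; [|exact Hf].
  apply (eq_0_of_small c K), (filter_imp (fun e => Rabs (c + f e) <= K * e /\ 0 < e)).
  - intros e [H He]. rewrite Hf, Rplus_0_r in H by exact He. exact H.
  - apply (filter_and _ _ Hmul), at_right_0_pos.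
Qed.

Lemma principal_sum_eq_0 N : forall a,
  bounded_near_0 (principal_sum N a) -> forall e, 0 < e -> principal_sum N a e = 0.
Proof.
  induction N as [|N IH]; intros a Hb e He; [reflexivity|].
  assert (Hstep : bounded_near_0 (fun e => (a 0%nat + principal_sum N (fun k => a (S k)) e) / e)).
  { apply (bounded_near_0_ext (principal_sum (S N) a)); [|exact Hb].
    intros; apply principal_sum_S; lra. }
  destruct (bounded_div_step _ _ Hstep (IH _)) as [H0 Hf].
  rewrite principal_sum_S, H0, Hf by lra. field. lra.
Qed.

Lemma principal_sum_eq N : forall M a a',
  bounded_near_0 (fun e => principal_sum N a e - principal_sum M a' e) ->
  forall e, 0 < e -> principal_sum N a e = principal_sum M a' e.
Proof.
  induction N as [|N IH]; intros M a a' [K HK] e He.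
  - rewrite principal_sum_0. symmetry. apply principal_sum_eq_0; [|exact He].
    exists K. revert HK. apply filter_imp. intros e'. rewrite Rminus_0_l, Rabs_Ropp. auto.
  - destruct M as [|M].
    + apply principal_sum_eq_0; [|exact He].
      exists K. revert HK. apply filter_imp. intros e'. rewrite principal_sum_0, Rminus_0_r. auto.
    + set (f := fun e => principal_sum N (fun k => a (S k)) e - principal_sum M (fun k => a' (S k)) e).
      assert (Hstep : bounded_near_0 (fun e => (a 0%nat - a' 0%nat + f e) / e)).
      { apply (bounded_near_0_ext (fun e => principal_sum (S N) a e - principal_sum (S M) a' e)).
        - intros e' He'. rewrite !principal_sum_S by lra. unfold f. field. lra.
        - exists K. exact HK. }
      destruct (bounded_div_step _ _ Hstep (fun Hf e' He' => Rminus_diag_eq _ _ (IH _ _ _ Hf e' He')))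
        as [H0 Hf].
      specialize (Hf e He). unfold f in Hf.
      rewrite !principal_sum_S by lra. apply (Rmult_eq_reg_r e); [|lra]. field_simplify; lra.
Qed.

Lemma bounded_near_0_of_pseries b h d : 0 < d ->
  (forall e, 0 < e < d -> is_pseries b e (h e)) -> bounded_near_0 h.
Proof.
  intros Hd Hh.
  assert (Hr : Rbar_lt (Rabs 0) (CV_radius b)).
  { apply (Rbar_lt_le_trans _ (d / 2)); [rewrite Rabs_R0; simpl; lra|].
    apply CV_radius_ge_of_ex_pseries; [lra|]. eexists. apply Hh. lra. }
  assert (Hc := proj1 (continuity_pt_filterlim _ _) (PSeries_continuity b 0 Hr)).
  exists (Rabs (PSeries b 0) + 1).
  apply (filter_imp (fun e => ball (PSeries b 0) 1 (PSeries b e) /\ 0 < e < d)).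
  - intros e [Hb He]. rewrite <- (is_pseries_unique _ _ _ (Hh e He)).
    unfold ball in Hb; simpl in Hb; unfold AbsRing_ball, abs, minus, plus, opp in Hb; simpl in Hb.
    replace (PSeries b e) with (PSeries b 0 + (PSeries b e + - PSeries b 0)) by ring.
    apply (Rle_trans _ _ _ (Rabs_triang _ _)). lra.
  - apply filter_and; [|apply at_right_0_lt, Hd].
    apply filter_le_within, Hc. apply (locally_ball _ (mkposreal 1 Rlt_0_1)).
Qed.

Lemma principal_part_unique g P Q :
  is_principal_part g P -> is_principal_part g Q -> forall e, 0 < e -> P e = Q e.
Proof.
  intros [N [a [b [d [Hd [-> Hb]]]]]] [M [a' [b' [d' [Hd' [-> Hb']]]]]].
  apply principal_sum_eq.
  apply (bounded_near_0_ext (fun e => (g e - principal_sum M a' e) - (g e - principal_sum N a e)));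
    [intros; ring|].
  apply bounded_near_0_minus;
    [exact (bounded_near_0_of_pseries _ _ _ Hd' Hb') | exact (bounded_near_0_of_pseries _ _ _ Hd Hb)].
Qed.

Lemma Rop_eq F P : is_principal_part (fun e => F e 1) P -> forall e, 0 < e -> Rop F e = P e.
Proof.
  intros H. apply (principal_part_unique (fun e => F e 1)); [|exact H].
  unfold Rop. apply epsilon_spec. exists P. exact H.
Qed.

(** * The subtractions and the renormalized limit *)

(* [phi_l2 e 1 = pi_csc e * pi_csc (2 e) = 1 / (2 e^2) + l2_regular e]. *)
Definition l2_regular (e : R) : R :=
  2 * pf_sum (2 * e) + 1 / 2 * pf_sum e + 2 * (e * (e * (pf_sum e * pf_sum (2 * e)))).

Definition l2_regular_coef : nat -> R :=
  PS_plus (PS_plus (PS_scal 2 pf_coef2) (PS_scal (1 / 2) pf_coef))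
          (PS_scal 2 (PS_incr_1 (PS_incr_1 (PS_mult pf_coef pf_coef2)))).

Lemma is_pseries_l2_regular e : 0 <= e < 1 / 4 -> is_pseries l2_regular_coef e (l2_regular e).
Proof.
  intros He. unfold l2_regular_coef, l2_regular.
  apply (@is_pseries_plus R_AbsRing R_NormedModule _ _ _
           (plus (scal 2 (pf_sum (2 * e))) (scal (1 / 2) (pf_sum e)))).
  apply (@is_pseries_plus R_AbsRing R_NormedModule).
  - apply (@is_pseries_scal R_AbsRing R_NormedModule); [unfold mult; simpl; ring|].
    apply is_pseries_pf_sum_2. lra.
  - apply (@is_pseries_scal R_AbsRing R_NormedModule); [unfold mult; simpl; ring|].
    apply is_pseries_pf_sum. lra.
  - apply (@is_pseries_scal R_AbsRing R_NormedModule 2 _ e (e * (e * (pf_sum e * pf_sum (2 * e)))));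
      [unfold mult; simpl; ring|].
    apply (@is_pseries_incr_1 R_AbsRing R_NormedModule _ e (e * (pf_sum e * pf_sum (2 * e)))).
    apply (@is_pseries_incr_1 R_AbsRing R_NormedModule _ e (pf_sum e * pf_sum (2 * e))).
    apply is_pseries_mult.
    + apply is_pseries_pf_sum. lra.
    + apply is_pseries_pf_sum_2. lra.
    + apply (Rabs_lt_CV_radius _ 1); [apply pf_coef_radius | lra].
    + apply (Rabs_lt_CV_radius _ (1 / 2)); [apply pf_coef2_radius | lra].
Qed.

Lemma principal_part_phi_dot : is_principal_part (fun e => phi_dot e 1) (principal_sum 1 (fun _ => 1)).
Proof.
  exists 1%nat, (fun _ => 1), (PS_incr_1 pf_coef), (1 / 2). do 2 (split; [lra || reflexivity|]).
  intros e He. rewrite phi_dot_eq, Rpower_1_l, Rmult_1_l by lra.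
  replace (pi_csc e - principal_sum 1 (fun _ => 1) e) with (scal e (pf_sum e)).
  - apply (@is_pseries_incr_1 R_AbsRing R_NormedModule), is_pseries_pf_sum. lra.
  - unfold pi_csc, principal_sum, scal; simpl; unfold mult; simpl. field. lra.
Qed.

Lemma Rop_phi_dot e : 0 < e -> Rop phi_dot e = 1 / e.
Proof.
  intros He. rewrite (Rop_eq _ _ principal_part_phi_dot e He).
  unfold principal_sum; simpl. field. lra.
Qed.

Lemma principal_part_Rop_phi_dot_mul :
  is_principal_part (fun e => Rop phi_dot e * phi_dot e 1)
    (principal_sum 2 (fun k => match k with 0%nat => 0 | _ => 1 end)).
Proof.
  exists 2%nat, (fun k => match k with 0%nat => 0 | _ => 1 end), pf_coef, (1 / 2).
  do 2 (split; [lra || reflexivity|]).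
  intros e He. rewrite phi_dot_eq, Rop_phi_dot, Rpower_1_l, Rmult_1_l by lra.
  replace (1 / e * pi_csc e - principal_sum 2 (fun k => match k with 0%nat => 0 | _ => 1 end) e)
    with (pf_sum e).
  - apply is_pseries_pf_sum. lra.
  - unfold pi_csc, principal_sum; simpl. field. lra.
Qed.

Lemma Rop_Rop_phi_dot_mul e : 0 < e ->
  Rop (fun e' c' => Rop phi_dot e' * phi_dot e' c') e = 1 / e ^ 2.
Proof.
  intros He. rewrite (Rop_eq _ _ principal_part_Rop_phi_dot_mul e He).
  unfold principal_sum; simpl. field. lra.
Qed.

Lemma principal_part_phi_l2 :
  is_principal_part (fun e => phi_l2 e 1)
    (principal_sum 2 (fun k => match k with 0%nat => 0 | _ => 1 / 2 end)).
Proof.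
  exists 2%nat, (fun k => match k with 0%nat => 0 | _ => 1 / 2 end), l2_regular_coef, (1 / 4).
  do 2 (split; [lra || reflexivity|]).
  intros e He. rewrite phi_l2_eq, Rpower_1_l, Rmult_1_l by lra.
  replace (pi_csc e * pi_csc (2 * e)
           - principal_sum 2 (fun k => match k with 0%nat => 0 | _ => 1 / 2 end) e)
    with (l2_regular e).
  - apply is_pseries_l2_regular. lra.
  - unfold l2_regular, pi_csc, principal_sum; simpl. field. lra.
Qed.

Lemma Rop_phi_l2 e : 0 < e -> Rop phi_l2 e = 1 / (2 * e ^ 2).
Proof.
  intros He. rewrite (Rop_eq _ _ principal_part_phi_l2 e He).
  unfold principal_sum; simpl. field. lra.
Qed.

Lemma lim_Rpower_opp c : 0 < c -> filterlim (fun e => Rpower c (- e)) (at_right 0) (locally 1).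
Proof.
  intros Hc. replace 1 with ((fun e => Rpower c (- e)) 0) by (simpl; rewrite Ropp_0; apply Rpower_O, Hc).
  apply (filterlim_at_right_of_continuous (fun e => Rpower c (- e))).
  apply (@ex_derive_continuous R_AbsRing R_NormedModule). unfold Rpower. auto_derive. auto.
Qed.

Lemma lim_Rpower_opp_quot c : 0 < c ->
  filterlim (fun e => (Rpower c (- e) - 1) / e) (at_right 0) (locally (- ln c)).
Proof.
  intros Hc.
  assert (Hd : derivable_pt_lim (fun h => Rpower c (- h)) 0 (- ln c)).
  { apply is_derive_Reals. unfold Rpower. auto_derive; auto.
    rewrite Ropp_0, Rmult_0_l, exp_0. ring. }
  apply (proj2 (filterlim_locally _ _)). intros eps.
  destruct (Hd eps (cond_pos eps)) as [delta Hdel].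
  exists delta. intros y Hy Hy0.
  unfold ball in Hy |- *; simpl in Hy |- *; unfold AbsRing_ball, abs, minus, plus, opp in Hy |- *;
    simpl in Hy |- *.
  rewrite Ropp_0, Rplus_0_r in Hy.
  specialize (Hdel y ltac:(lra) Hy).
  rewrite Rplus_0_l, Ropp_0, Rpower_O in Hdel by lra. exact Hdel.
Qed.

Lemma lim_l2_regular : filterlim l2_regular (at_right 0) (locally (5 * PI ^ 2 / 12)).
Proof.
  assert (H1 := lim_pf_sum). assert (H2 := lim_pf_sum_scaled 2 Rlt_0_2).
  assert (Hid : filterlim (fun e : R => e) (at_right 0) (locally 0)).
  { apply (filterlim_filter_le_1 _ (filter_le_within _)), filterlim_id. }
  replace (5 * PI ^ 2 / 12)
    with (2 * (PI ^ 2 / 6) + 1 / 2 * (PI ^ 2 / 6) + 2 * (0 * (0 * (PI ^ 2 / 6 * (PI ^ 2 / 6)))))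
    by field.
  repeat apply filterlim_Rplus || apply filterlim_Rmult; try apply filterlim_const; assumption.
Qed.

Lemma renormalized_phi_l2_eq c e : 0 < c -> 0 < e < 1 / 2 ->
  let u := Rpower c (- e) in
  phi_l2 e c - Rop phi_l2 e - Rop phi_dot e * phi_dot e c
  + Rop (fun e' c' => Rop phi_dot e' * phi_dot e' c') e
  = (u - 1) / e * ((u - 1) / e) / 2 + u * u * l2_regular e - u * pf_sum e.
Proof.
  intros Hc He u.
  rewrite phi_l2_eq, Rop_phi_l2, Rop_phi_dot, phi_dot_eq, Rop_Rop_phi_dot_mul by lra.
  replace (- (2 * e)) with (- e + - e) by ring. rewrite Rpower_plus. fold u.
  unfold pi_csc, l2_regular. field. lra.
Qed.

Theorem mainTheorem6 (c : R) (hc : 0 < c) :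
  filterlim
    (fun e => phi_l2 e c - Rop phi_l2 e - Rop phi_dot e * phi_dot e c
              + Rop (fun e' c' => Rop phi_dot e' * phi_dot e' c') e)
    (at_right 0)
    (locally ((ln c) ^ 2 / 2 + PI ^ 2 / 4)).
Proof.
  set (u := fun e => Rpower c (- e)).
  apply (filterlim_ext_loc (fun e => (u e - 1) / e * ((u e - 1) / e) / 2
                                     + u e * u e * l2_regular e - u e * pf_sum e)).
  { apply (filter_imp (fun e => 0 < e < 1 / 2)); [|apply at_right_0_lt; lra].
    intros e He. symmetry. apply renormalized_phi_l2_eq; assumption. }
  assert (Hq := lim_Rpower_opp_quot c hc). assert (Hu := lim_Rpower_opp c hc).
  assert (Hp := lim_pf_sum).
  replace ((ln c) ^ 2 / 2 + PI ^ 2 / 4)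
    with (- ln c * - ln c / 2 + 1 * 1 * (5 * PI ^ 2 / 12) - 1 * (PI ^ 2 / 6)) by field.
  apply filterlim_Rminus; [apply filterlim_Rplus|]; repeat apply filterlim_Rmult; auto.
  - apply filterlim_const.
  - apply lim_l2_regular.
Qed.
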